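(* Let $n\in\omega$ and let $\mathcal{M}$ be a structure with exactly $n$ elements. Then ${\rm ar}({\rm Th}(\mathcal{M}))\leq n$.
   Context: All theories are complete first-order theories. For $n\geq 1$, a formula $\varphi(\overline{x})$ of a theory $T$ is $n$-ary if it is $T$-equivalent to a Boolean combination of $T$-formulas each of which has at most $n$ free variables; for $n=0$, $\varphi(\overline{x})$ is $0$-ary if it is $T$-equivalent to a sentence. A theory $T$ is unary ($1$-ary) if every $T$-formula is $T$-equivalent to a Boolean combination of $T$-formulas with one free variable and formulas of the form $x\approx y$; for $n\geq 2$, $T$ is $n$-ary if every $T$-formula is $n$-ary. The arity ${\rm ar}(T)$ is the natural number $n$ such that $T$ is $n$-ary and not $(n-1)$-ary; if $T$ is $n$-ary for no $n$, ${\rm ar}(T)=\infty$. *)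

From mathcomp Require Import all_boot.
Set Implicit Arguments. Unset Strict Implicit. Unset Printing Implicit Defensive.

Record signature := Signature {
  fsym : Type; fari : fsym -> nat;
  rsym : Type; rari : rsym -> nat }.

Section Syntax.
Variable L : signature.

Inductive term : Type :=
| tvar : nat -> term
| tapp (f : fsym L) : ('I_(fari f) -> term) -> term.

Inductive form : Type :=
| Fal : form
| Eq : term -> term -> form
| Rel (r : rsym L) : ('I_(rari r) -> term) -> form
| Not : form -> form
| And : form -> form -> form
| Or : form -> form -> form
| Imp : form -> form -> form
| Ex : nat -> form -> form
| All : nat -> form -> form.

Fixpoint tfv (t : term) : seq nat :=
  match t with
  | tvar x => [:: x]
  | tapp f ts => flatten [seq tfv (ts i) | i <- enum 'I_(fari f)]
  end.

Fixpoint ffv (p : form) : seq nat :=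
  match p with
  | Fal => [::]
  | Eq t u => tfv t ++ tfv u
  | Rel r ts => flatten [seq tfv (ts i) | i <- enum 'I_(rari r)]
  | Not q => ffv q
  | And q s | Or q s | Imp q s => ffv q ++ ffv s
  | Ex x q | All x q => [seq y <- ffv q | y != x]
  end.

Definition sentence (p : form) : Prop := ffv p = [::].

Definition nfv (p : form) : nat := size (undup (ffv p)).

Definition Iff (p q : form) : form := And (Imp p q) (Imp q p).

Definition uclose (p : form) : form := foldr All p (undup (ffv p)).

Inductive boolcomb (B : form -> Prop) : form -> Prop :=
| bc_base p : B p -> boolcomb B p
| bc_not p : boolcomb B p -> boolcomb B (Not p)
| bc_and p q : boolcomb B p -> boolcomb B q -> boolcomb B (And p q)
| bc_or p q : boolcomb B p -> boolcomb B q -> boolcomb B (Or p q)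
| bc_imp p q : boolcomb B p -> boolcomb B q -> boolcomb B (Imp p q).

Definition theory := form -> Prop.

(* T-equivalence: T contains (so proves) the universal closure of p <-> q *)
Definition T_equiv (T : theory) (p q : form) : Prop := T (uclose (Iff p q)).

Definition formula_nary (T : theory) (n : nat) (p : form) : Prop :=
  if n is 0 then exists s, sentence s /\ T_equiv T p s
  else exists q, boolcomb (fun c => nfv c <= n) q /\ T_equiv T p q.

(* n-ary theories; for n = 1 the special "unary" definition;
   for n = 0: every formula is 0-ary *)
Definition theory_nary (T : theory) (n : nat) : Prop :=
  match n with
  | 1 => forall p, exists q,
           boolcomb (fun c => nfv c <= 1 \/ exists x y, c = Eq (tvar x) (tvar y)) q
           /\ T_equiv T p q
  | _ => forall p, formula_nary T n p
  end.

(* ar(T) = n : T is n-ary and not (n-1)-ary *)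
Definition is_arity (T : theory) (n : nat) : Prop :=
  theory_nary T n /\ (forall m, n = m.+1 -> ~ theory_nary T m).

End Syntax.

Record structure (L : signature) := Structure {
  carrier :> Type;
  finterp : forall f : fsym L, ('I_(fari f) -> carrier) -> carrier;
  rinterp : forall r : rsym L, ('I_(rari r) -> carrier) -> Prop }.

Section Semantics.
Variables (L : signature) (M : structure L).

Definition upd (env : nat -> M) (x : nat) (a : M) : nat -> M :=
  fun y => if y == x then a else env y.

Fixpoint teval (env : nat -> M) (t : term L) : M :=
  match t with
  | tvar x => env x
  | tapp f ts => @finterp L M f (fun i => teval env (ts i))
  end.

Fixpoint holds (env : nat -> M) (p : form L) : Prop :=
  match p with
  | Fal => False
  | Eq t u => teval env t = teval env u
  | Rel r ts => @rinterp L M r (fun i => teval env (ts i))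
  | Not q => ~ holds env q
  | And q s => holds env q /\ holds env s
  | Or q s => holds env q \/ holds env s
  | Imp q s => holds env q -> holds env s
  | Ex x q => exists a, holds (upd env x a) q
  | All x q => forall a, holds (upd env x a) q
  end.

Definition Th : theory L := fun s => sentence s /\ forall env, holds env s.

End Semantics.

From Stdlib Require Import Classical FunctionalExtensionality.
From mathcomp Require Import all_boot.

Set Implicit Arguments. Unset Strict Implicit. Unset Printing Implicit Defensive.

(* In a structure with n elements, any assignment to more than n variables
   gives two of them the same value. Hence a formula p with more than n free
   variables is equivalent to the disjunction, over distinct free variables
   x, y of p, of x = y /\ p, and in each disjunct p may be replaced by
   p[x/y] = Ex y (y = x /\ p), which has fewer free variables. Induction on the
   number of free variables rewrites every formula as a Boolean combination of
   equalities and formulas with at most n free variables. *)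

Section Syntax.
Variable L : signature.
Implicit Types (p q c : form L) (B : form L -> Prop).

Lemma ffv_foldr_All p xs y :
  y \in ffv (foldr (@All L) p xs) -> (y \in ffv p) && (y \notin xs).
Proof.
elim: xs => [|x xs IH] /=; first by move=> ->.
rewrite mem_filter in_cons => /andP[yx /IH /andP[-> yxs]].
by rewrite (negbTE yx).
Qed.

Lemma sentence_uclose p : sentence (uclose p).
Proof.
rewrite /sentence /uclose.
case E: (ffv _) => [|y s] //.
have : y \in ffv (foldr (@All L) p (undup (ffv p))) by rewrite E mem_head.
by move/ffv_foldr_All; rewrite mem_undup => /andP[->].
Qed.

Lemma boolcomb_mono B B' q :
  (forall c, B c -> B' c) -> boolcomb B q -> boolcomb B' q.
Proof.
move=> BB'; elim=> {q} [c /BB'||||]; by constructor.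
Qed.

Definition identify (x y : nat) p : form L :=
  Ex y (And (Eq (tvar L y) (tvar L x)) p).

Lemma nfv_identify x y p :
  x != y -> x \in ffv p -> y \in ffv p -> nfv (identify x y p) < nfv p.
Proof.
move=> xy xp yp; rewrite /nfv.
have sub : {subset undup (ffv (identify x y p)) <= rem y (undup (ffv p))}.
  move=> z; rewrite mem_rem_uniq ?undup_uniq // mem_undup /= eqxx xy !inE.
  rewrite mem_filter mem_undup.
  by case/orP => [/eqP -> | /andP[-> ->]]; rewrite ?xy.
apply: leq_ltn_trans (uniq_leq_size (undup_uniq _) sub) _.
rewrite size_rem ?mem_undup // ltn_predL -has_predT.
by apply/hasP; exists y; rewrite ?mem_undup.
Qed.

Definition small_or_eq (n : nat) c : Prop :=
  nfv c <= n \/ exists x y, c = Eq (tvar L x) (tvar L y).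

Lemma nfv_Eq_tvar x y : nfv (Eq (tvar L x) (tvar L y)) <= 2.
Proof. by rewrite /nfv /=; case: ifP. Qed.

Lemma exists_arity_le (T : theory L) m :
  theory_nary T m -> exists k, is_arity T k /\ k <= m.
Proof.
elim: m => [|m IH] Tm; first by exists 0; split; first by split=> // ? [].
have [/IH [k [Tk le_k_m]] | not_Tm] := classic (theory_nary T m).
  by exists k; split => //; apply: leq_trans le_k_m _.
by exists m.+1; split; first by split=> // ? [<-].
Qed.

End Syntax.

Section Semantics.
Variables (L : signature) (M : structure L).
Implicit Types (p q : form L) (B : form L -> Prop) (env : nat -> M).

Definition sem_equiv p q := forall env, holds env p <-> holds env q.

Lemma holds_foldr_All p xs :
  (forall env, holds env p) -> forall env, holds env (foldr (@All L) p xs).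
Proof. by elim: xs => [|x xs IH] //= p_valid env a; apply: IH. Qed.

Lemma Th_equiv p q : sem_equiv p q -> T_equiv (Th M) p q.
Proof.
move=> pq; split; first exact: sentence_uclose.
by apply: holds_foldr_All => env /=; split => /pq.
Qed.

Lemma upd_id env y : upd env y (env y) = env.
Proof. by apply: functional_extensionality => z; rewrite /upd; case: eqP => [->|]. Qed.

Lemma holds_identify env x y p :
  x != y -> env x = env y -> holds env (identify x y p) <-> holds env p.
Proof.
move=> /negbTE xy exy /=; have upd_x a : upd env y a x = env x by rewrite /upd xy.
have upd_y a : upd env y a y = a by rewrite /upd eqxx.
split => [[a []] | hp]; first by rewrite upd_x upd_y => ->; rewrite exy upd_id.
by exists (env y); rewrite upd_x upd_y exy upd_id.
Qed.

Lemma boolcomb_exists_seq B (A : eqType) (s : seq A) (P : A -> (nat -> M) -> Prop) :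
  B (Fal L) ->
  (forall a, a \in s -> exists q, boolcomb B q /\ forall env, holds env q <-> P a env) ->
  exists q, boolcomb B q /\ forall env, holds env q <-> exists2 a, a \in s & P a env.
Proof.
move=> BFal; elim: s => [|a s IH] Ps.
  by exists (Fal L); split; [constructor | move=> env; split => // -[]].
have [q [Bq qP]] := Ps a (mem_head _ _).
have [r [Br rP]] : exists r, boolcomb B r /\
    forall env, holds env r <-> exists2 b, b \in s & P b env.
  by apply: IH => b bs; apply: Ps; rewrite in_cons bs orbT.
exists (Or q r); split; first exact: bc_or.
move=> env /=; rewrite qP rP; split.
  case=> [Pa | [b bs Pb]]; first by exists a; rewrite ?mem_head.
  by exists b; rewrite ?in_cons ?bs ?orbT.
by case=> b; rewrite in_cons => /orP[/eqP -> | bs Pb]; [left | right; exists b].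
Qed.

Section Finite.
Variables (n : nat) (g : M -> 'I_n).
Hypothesis g_inj : injective g.

Lemma pigeonhole_ffv env p : n < nfv p ->
  exists x y, [/\ x != y, x \in ffv p, y \in ffv p & env x = env y].
Proof.
set vs := undup (ffv p) => big.
have /(uniqPn (g (env 0))) [i [j [lt_ij lt_j vs_ij]]] : ~~ uniq [seq g (env x) | x <- vs].
  apply: contraTN big => /card_uniqP; rewrite size_map -leqNgt /nfv -/vs => <-.
  by apply: leq_trans (max_card _) _; rewrite card_ord.
rewrite size_map in lt_j; have lt_i := ltn_trans lt_ij lt_j.
rewrite !(nth_map 0) // in vs_ij.
exists (nth 0 vs i), (nth 0 vs j); split; last exact: g_inj.
- by rewrite nth_uniq ?undup_uniq // ltn_eqF.
- by rewrite -mem_undup mem_nth.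
- by rewrite -mem_undup mem_nth.
Qed.

Lemma boolcomb_small_or_eq p :
  exists q, boolcomb (small_or_eq n) q /\ sem_equiv p q.
Proof.
have [k] := ubnP (nfv p); elim: k p => // k IH p; rewrite ltnS => le_p_k.
have [small | big] := leqP (nfv p) n.
  by exists p; split=> //; constructor; left.
set vs := undup (ffv p).
set pairs := [seq xy <- [seq (x, y) | x <- vs, y <- vs] | xy.1 != xy.2].
have [q [Bq qP]] : exists q, boolcomb (small_or_eq n) q /\ forall env,
    holds env q <-> exists2 xy, xy \in pairs & env xy.1 = env xy.2 /\ holds env p.
  apply: boolcomb_exists_seq; first by left.
  case=> x y; rewrite mem_filter /= => /andP[xy /allpairsP[[x' y'] /= [xp yp [ex ey]]]].
  subst x' y'.
  rewrite !mem_undup in xp yp.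
  have [r [Br rP]] := IH _ (leq_trans (nfv_identify xy xp yp) le_p_k).
  exists (And (Eq (tvar L x) (tvar L y)) r); split.
    by apply: bc_and => //; constructor; right; exists x, y.
  by move=> env /=; rewrite -rP; split=> -[exy]; rewrite holds_identify.
exists q; split => // env; rewrite qP; split => [hp | [xy _ []//]].
have [x [y [xy xp yp exy]]] := pigeonhole_ffv env big.
exists (x, y) => //; rewrite mem_filter xy; apply/allpairsP.
by exists (x, y); rewrite !mem_undup.
Qed.

End Finite.
End Semantics.

Theorem proposition1p4 (L : signature) (M : structure L) (n : nat)
  (HM : exists e : 'I_n -> carrier M, bijective e) :
  exists k, is_arity (Th M) k /\ k <= n.
Proof.
case: HM => e [g _ gK]; have {e gK} g_inj := can_inj gK.
apply: exists_arity_le.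
case: n g g_inj => [|[|n]] g g_inj p.
- (* M is empty, so there are no environments at all. *)
  by exists (Fal L); split => //; apply: Th_equiv => env; case: (g (env 0)).
- have [q [Bq pq]] := boolcomb_small_or_eq g_inj p.
  by exists q; split => //; apply: Th_equiv.
- have [q [Bq pq]] := boolcomb_small_or_eq g_inj p.
  exists q; split; last exact: Th_equiv.
  apply: boolcomb_mono Bq => c [//|[x [y ->]]].
  exact: leq_trans (nfv_Eq_tvar L x y) _.
Qed.
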